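(* Let $G=(V,E,H)$ be a HEDG and $X,Y,Z\subseteq V$. Let $A=\mathrm{Anc}^G(X\cup Y\cup Z)$ with its induced sub-HEDG structure and $A^{\mathrm{moral}}$ its moralization. Then $X\perp^d_G Y\mid Z$ if and only if $X$ is separated from $Y$ given $Z$ in the undirected graph $A^{\mathrm{moral}}$.
   Context: A HEDG is $G=(V,E,H)$: $V$ finite, $E\subseteq V\times V$ directed edges (self-loops allowed), $H$ a simplicial complex on $V$ (contains all singletons, closed under subsets); for distinct $v,w$, $v\leftrightarrow w$ means $\{v,w\}\in H$. $\mathrm{Pa}^G(v)=\{u:(u,v)\in E\}$; $\mathrm{Anc}^G(S)$ = nodes with a directed path into $S$ (including $S$). The induced sub-HEDG on $A$ is $(A,E\cap A^2,\{F\in H:F\subseteq A\})$. Moralization: undirected graph on the node set with $v - w$ ($v\ne w$) iff there exist nodes $v_1,\dots,v_n$ ($n\ge1$) with $v\in\{v_1\}\cup\mathrm{Pa}(v_1)$, $w\in\{v_n\}\cup\mathrm{Pa}(v_n)$ and $v_1\leftrightarrow v_2\leftrightarrow\cdots\leftrightarrow v_n$. A path is a sequence of nodes (repetitions allowed, $n\ge1$) with consecutive nodes joined by an edge $\to$, $\leftarrow$ or $\leftrightarrow$. It is $Z$-blocked if an endnode is in $Z$, or some intermediate node $v_i$ is a collider (both adjacent edges have an arrowhead at $v_i$) with $v_i\notin\mathrm{Anc}^G(Z)$, or some intermediate non-collider lies in $Z$. $X\perp^d_G Y\mid Z$ iff every path with one endnode in $X$ and the other in $Y$ is $Z$-blocked.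 In an undirected graph, $X$ is separated from $Y$ given $Z$ if every path with one endnode in $X$ and the other in $Y$ contains a node of $Z$. *)

From mathcomp Require Import all_boot.
Set Implicit Arguments. Unset Strict Implicit. Unset Printing Implicit Defensive.

(* A HEDG (V,E,H): V a finite type of nodes, E a (boolean) directed edge
   relation (self-loops allowed), H a simplicial complex on V. *)
Record HEDG (V : finType) := MkHEDG {
  hE : rel V;
  hH : {set {set V}};
  hH_single : forall v : V, [set v] \in hH;
  hH_closed : forall F F' : {set V}, F \in hH -> F' \subset F -> F' \in hH
}.

Section HEDGDefs.
Variables (V : finType) (G : HEDG V).

Definition bidir (v w : V) : bool := (v != w) && ([set v; w] \in hH G).

Definition Pa (v : V) : {set V} := [set u | hE G u v].

Definition Anc (S : {set V}) : {set V} :=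
  [set u | [exists s in S, connect (hE G) u s]].

(* kind of the edge between consecutive nodes a (earlier) and b (later) *)
Inductive ekind := Fwd | Bwd | Bi .

Definition edge_ok (k : ekind) (a b : V) : bool :=
  match k with
  | Fwd => hE G a b
  | Bwd => hE G b a
  | Bi => bidir a b
  end.

Definition head_at_later (k : ekind) : bool :=
  match k with Fwd | Bi => true | Bwd => false end.
Definition head_at_earlier (k : ekind) : bool :=
  match k with Bwd | Bi => true | Fwd => false end.

(* A path is a start node x0 together with a list of steps (edge kind, next
   node); its nodes are x0 :: map snd st (n = size st + 1 >= 1 nodes). *)
Definition pnode (x0 : V) (st : seq (ekind * V)) (i : nat) : V :=
  nth x0 (x0 :: map snd st) i.
Definition pkind (st : seq (ekind * V)) (i : nat) : ekind :=
  nth Fwd (map fst st) i.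
Definition plast (x0 : V) (st : seq (ekind * V)) : V := last x0 (map snd st).

Definition valid_path (x0 : V) (st : seq (ekind * V)) : Prop :=
  forall i, i < size st -> edge_ok (pkind st i) (pnode x0 st i) (pnode x0 st i.+1).

(* intermediate node i (0 < i < size st) is a collider *)
Definition collider (st : seq (ekind * V)) (i : nat) : bool :=
  head_at_later (pkind st i.-1) && head_at_earlier (pkind st i).

Definition Z_blocked (Z : {set V}) (x0 : V) (st : seq (ekind * V)) : Prop :=
  x0 \in Z \/ plast x0 st \in Z \/
  exists i, 0 < i < size st /\
    ((collider st i /\ pnode x0 st i \notin Anc Z) \/
     (~~ collider st i /\ pnode x0 st i \in Z)).

Definition dsep (X Y Z : {set V}) : Prop :=
  forall x0 st, valid_path x0 st ->
    (x0 \in X /\ plast x0 st \in Y) \/ (x0 \in Y /\ plast x0 st \in X) ->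
    Z_blocked Z x0 st.

(* In the induced sub-HEDG on A: edges E ∩ A^2, bidirected edges {v,w} ⊆ A
   in H.  v - w (v <> w) iff there are v1..vn in A with v ∈ {v1} ∪ Pa_A(v1),
   w ∈ {vn} ∪ Pa_A(vn) and v1 <-> v2 <-> ... <-> vn in A. *)
Definition bidirA (A : {set V}) (v w : V) : bool :=
  [&& v \in A, w \in A & bidir v w].

Definition moral_adj (A : {set V}) (v w : V) : Prop :=
  [/\ v != w, v \in A, w \in A &
   exists (v1 : V) (s : seq V),
     [/\ v1 \in A, all (fun u => u \in A) s, path (bidirA A) v1 s,
         (v == v1) || hE G v v1 &
         (w == last v1 s) || hE G w (last v1 s)]].

Definition moral_sep (A X Y Z : {set V}) : Prop :=
  forall (x0 : V) (s : seq V),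
    x0 \in A -> all (fun u => u \in A) s ->
    (forall i, i < size s -> moral_adj A (nth x0 (x0 :: s) i) (nth x0 (x0 :: s) i.+1)) ->
    (x0 \in X /\ last x0 s \in Y) \/ (x0 \in Y /\ last x0 s \in X) ->
    exists2 z, z \in x0 :: s & z \in Z.

End HEDGDefs.

From mathcomp Require Import all_boot.
From Stdlib Require Import Classical.
Set Implicit Arguments. Unset Strict Implicit. Unset Printing Implicit Defensive.

(* Call a path open when its endpoints and non-colliders avoid Z and its
   colliders lie in Anc Z; d-separation says no open path joins X and Y.

   (<-) All nodes of an open path between X and Y lie in A.  Between two
   consecutive non-colliders u, w the path reads u (->|=) v1 <-> ... <-> vn
   (<-|=) w, so u and w are moral neighbours: the non-colliders form a moral
   path avoiding Z.

   (->) A moral path avoiding Z lifts to a path whose non-colliders avoid Z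
   but whose colliders are only known to lie in A.  A collider c outside
   Anc Z is an ancestor of X or of Y.  If c ->...-> y with y in Y, that
   directed path avoids Anc Z and ends an open path from X.  If
   c ->...-> x with x in X, it read backwards is an open path from X to c
   that leaves c as a non-collider, so the search restarts at c.  Tracking
   the states reachable from X by open paths (walks may repeat nodes) turns
   this into an open path from X to Y. *)

Section OpenPaths.
Variables (V : finType) (G : HEDG V).
Implicit Types (x y : V) (st : seq (ekind * V)) (k : ekind) (Z C B : {set V}).

(* [h] tells whether the edge entering [x] has an arrowhead at [x]; [x] is
   then a collider iff the next edge [k] also has one.  Colliders must lie
   in [C], all other nodes outside [Z]. *)
Definition open_at Z C (h : bool) k x : bool :=
  if h && head_at_earlier k then x \in C else x \notin Z.

Fixpoint open_path Z C (h : bool) x st : Prop :=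
  match st with
  | [::] => x \notin Z
  | (k, y) :: st' =>
      [/\ edge_ok G k x y, open_at Z C h k x & open_path Z C (head_at_later k) y st']
  end.

Definition head_in (h : bool) st (i : nat) : bool :=
  if i is j.+1 then head_at_later (pkind st j) else h.

Lemma pnode_cons x k y st i :
  i <= size st -> pnode x ((k, y) :: st) i.+1 = pnode y st i.
Proof. by move=> hi; apply: set_nth_default; rewrite /= size_map ltnS. Qed.

Lemma head_in_cons h k y st j :
  head_in h ((k, y) :: st) j.+1 = head_in (head_at_later k) st j.
Proof. by case: j. Qed.

Lemma valid_path_cons x k y st :
  valid_path G x ((k, y) :: st) <-> edge_ok G k x y /\ valid_path G y st.
Proof.
split=> [hv | [he hv] [|i] //=]; last first.
  by rewrite ltnS => hi; rewrite /pkind /= -/(pkind st i) !pnode_cons ?(ltnW hi) //; apply: hv.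
split=> [|i hi]; first exact: (hv 0).
by have := hv i.+1 hi; rewrite /pkind /= -/(pkind st i) !pnode_cons // ltnW.
Qed.

Lemma open_pathP Z C st h x : open_path Z C h x st <->
  [/\ valid_path G x st, plast x st \notin Z &
      forall i, i < size st -> open_at Z C (head_in h st i) (pkind st i) (pnode x st i)].
Proof.
elim: st h x => [|[k y] st IH] h x /=.
  by split=> [hx | [] //]; split=> // i.
split=> [[he hx /IH [hv hl hin]] | [/valid_path_cons [he hv] hl hin]].
  split=> //; first exact/valid_path_cons.
  case=> [|i] hi //.
  by rewrite head_in_cons /pkind /= -/(pkind st i) pnode_cons ?hin // ltnW.
split=> //; first exact: (hin 0).
apply/IH; split=> // i hi.
by have := hin i.+1 hi; rewrite head_in_cons /pkind /= -/(pkind st i) pnode_cons // ltnW.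
Qed.

Lemma open_path_head Z C x st : open_path Z C false x st -> x \notin Z.
Proof. by case: st => [|[k y] st] //= [_ hx _]. Qed.

Lemma open_path_unblocked Z x st :
  open_path Z (Anc G Z) false x st <-> valid_path G x st /\ ~ Z_blocked G Z x st.
Proof.
split=> [hc | [hv nb]].
  have hx := open_path_head hc; move/open_pathP: hc => [hv hl hin].
  split=> // -[hxZ | [hlZ | [i [/andP [hi0 hi] hb]]]].
  - by rewrite hxZ in hx.
  - by rewrite hlZ in hl.
  - have := hin i hi; case: i hi0 hi hb => // j _ hi hb.
    rewrite /open_at /= -/(collider st j.+1).
    by case: hb => [[-> /negbTE ->] | [/negbTE -> ->]].
apply/open_pathP; split=> //.
  by apply/negP => hl; apply: nb; right; left.
case=> [|j] hj; rewrite /open_at /=.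
  by apply/negP => hx; apply: nb; left.
rewrite -/(collider st j.+1); case hcol: (collider st j.+1).
  by apply/negPn/negP => hA; apply: nb; right; right; exists j.+1; split=> //; left.
by apply/negP => hZ; apply: nb; right; right; exists j.+1; rewrite hcol; split=> //; right.
Qed.

(* Every node of an open path is an ancestor of a collider or an endpoint:
   from a non-collider the path leaves along a tail and follows directed
   edges until it meets one. *)
Lemma open_path_closed Z C B :
  C \subset B -> (forall u v, hE G u v -> v \in B -> u \in B) ->
  forall st h x, open_path Z C h x st -> plast x st \in B -> (h = false -> x \in B) ->
  x \in B /\ all (fun p => p.2 \in B) st.
Proof.
move=> /subsetP hCB hpar; elim=> [|[k y] st IH] h x //= [he hi hc] hl hx.
have hy : head_at_later k = false -> y \in B.
  move: he hi; case: (k) => //= he hi _; apply: (hpar _ _ he).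
  by case: h hx hi => [_ /hCB | ->].
have [hyB hst] := IH _ _ hc hl hy; split; last by rewrite /= hyB.
case: h hx hi => [_ | -> //].
by case: (k) he => /= he hi; [apply: (hpar _ _ he) | apply: hCB | apply: hCB].
Qed.

End OpenPaths.

Section Ancestors.
Variables (V : finType) (G : HEDG V).
Implicit Types (u v x : V) (S : {set V}).

Lemma Anc_self S x : x \in S -> x \in Anc G S.
Proof. by move=> hx; rewrite inE; apply/existsP; exists x; rewrite hx connect0. Qed.

Lemma Anc_parent S u v : hE G u v -> v \in Anc G S -> u \in Anc G S.
Proof.
rewrite !inE => huv /existsP [s /andP [hs hc]]; apply/existsP; exists s.
by rewrite hs (connect_trans (connect1 huv) hc).
Qed.

Lemma Anc_subset S S' : S \subset S' -> Anc G S \subset Anc G S'.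
Proof.
move=> /subsetP hs; apply/subsetP => x; rewrite !inE => /existsP [s /andP [h hc]].
by apply/existsP; exists s; rewrite hc hs.
Qed.

Lemma notin_Anc S x : x \notin Anc G S -> x \notin S.
Proof. exact/contra/Anc_self. Qed.

Lemma notin_Anc_child S u v : hE G u v -> u \notin Anc G S -> v \notin Anc G S.
Proof. by move=> huv; apply/contra/Anc_parent. Qed.

End Ancestors.

Section MoralWalks.
Variables (V : finType) (G : HEDG V).
Implicit Types (u v w x e : V) (m s : seq V) (st : seq (ekind * V)) (Z C B : {set V}).

Fixpoint moral_walk B u m : Prop :=
  if m is w :: m' then moral_adj G B u w /\ moral_walk B w m' else True.

Definition moral_reach B Z u e :=
  exists m, [/\ moral_walk B u m, all (fun w => w \notin Z) m & last u m = e].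

Lemma moral_walk_nth B u m : moral_walk B u m <->
  forall i, i < size m -> moral_adj G B (nth u (u :: m) i) (nth u (u :: m) i.+1).
Proof.
elim: m u => [|w m IH] u /=; first by split=> // _ [].
have nth_u i : i < size m ->
    nth u (w :: m) i = nth w (w :: m) i /\ nth u (w :: m) i.+1 = nth w (w :: m) i.+1.
  by move=> hi; split; apply: set_nth_default => //=; apply: ltnW.
split=> [[h1 /IH h2] [|i] // hi | h].
  by have /= [-> ->] := nth_u i hi; apply: h2.
split; first exact: (h 0).
by apply/IH => i hi; have := h i.+1 hi; have /= [-> ->] := nth_u i hi.
Qed.

Lemma moral_walk_sub B u m : moral_walk B u m -> all (fun w => w \in B) m.
Proof. by elim: m u => [|w m IH] u //= [[_ _ -> _] /IH]. Qed.

Lemma moral_reach_cons B Z u v1 s w e :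
  u \in B -> v1 \in B -> all (fun z => z \in B) s -> path (bidirA G B) v1 s ->
  (u == v1) || hE G u v1 -> (w == last v1 s) || hE G w (last v1 s) ->
  w \in B -> w \notin Z -> moral_reach B Z w e -> moral_reach B Z u e.
Proof.
move=> hu hv1 hs hp huv hw hwB hwZ; have [-> // | neq] := eqVneq u w.
case=> m [hm hz hl]; exists (w :: m); split=> //=; last by rewrite hwZ.
by split=> //; split=> //; exists v1, s.
Qed.

(* Induction along the path, carrying the bidirected chain [v1 <-> ... <-> x]
   that started at the last non-collider [u]. *)
Lemma bidir_chain_moral_reach Z C B st : forall x h u v1 s,
  open_path G Z C h x st -> x \in B -> all (fun p => p.2 \in B) st ->
  u \in B -> u \notin Z -> v1 \in B -> all (fun z => z \in B) s ->
  path (bidirA G B) v1 s -> last v1 s = x -> (u == v1) || hE G u v1 ->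
  moral_reach B Z u (plast x st).
Proof.
elim: st => [|[k y] st IH] x h u v1 s /=.
  move=> hxZ hxB _ hu huZ hv1 hs hp hl huv.
  apply: (moral_reach_cons (w := x) hu hv1 hs hp huv) => //; last by exists [::].
  by rewrite hl eqxx.
case=> he hi hc hxB /andP [hyB hst] hu huZ hv1 hs hp hl huv.
rewrite [plast _ _]/=; case: k he hi hc => /= he hi hc.
- have hxZ : x \notin Z by move: hi; rewrite /open_at andbF.
  apply: (moral_reach_cons (w := x) hu hv1 hs hp huv) => //; first by rewrite hl eqxx.
  by apply: (IH y _ x y [::] hc) => //; rewrite he orbT.
- apply: (moral_reach_cons (w := y) hu hv1 hs hp huv) => //.
  + by rewrite hl he orbT.
  + exact: open_path_head hc.
  by apply: (IH y _ y y [::] hc) => //; [apply: open_path_head hc | rewrite eqxx].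
- apply: (IH y _ u v1 (rcons s y) hc) => //.
  + by rewrite all_rcons hyB.
  + by rewrite rcons_path hp hl /bidirA hxB hyB he.
  + by rewrite last_rcons.
Qed.

Lemma open_path_moral_reach Z C B x st :
  open_path G Z C false x st -> x \in B -> all (fun p => p.2 \in B) st ->
  moral_reach B Z x (plast x st).
Proof.
move=> hc hx hst; apply: (bidir_chain_moral_reach (v1 := x) (s := [::]) hc) => //.
  exact: open_path_head hc.
by rewrite eqxx.
Qed.

End MoralWalks.

Section MoralSepDsep.
Variables (V : finType) (G : HEDG V) (X Y Z : {set V}).
Local Notation A := (Anc G (X :|: Y :|: Z)).

Lemma moral_sep_dsep : moral_sep G A X Y Z -> dsep G X Y Z.
Proof.
move=> hsep x0 st hv hxy; apply: NNPP => nb.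
have hc : open_path G Z (Anc G Z) false x0 st by apply/open_path_unblocked.
have in_A v : (v \in X) || (v \in Y) -> v \in A.
  by move=> hv'; apply: Anc_self; rewrite !inE hv'.
have [hx0A hlA] : x0 \in A /\ plast x0 st \in A.
  by case: hxy => -[h1 h2]; split; apply: in_A; rewrite ?h1 ?h2 ?orbT.
have AZ_A : Anc G Z \subset A by apply/Anc_subset/subsetUr.
have [_ hstA] := open_path_closed AZ_A (@Anc_parent _ G _) hc hlA (fun _ => hx0A).
have [m [hm hmZ hml]] := open_path_moral_reach hc hx0A hstA.
have [|z] := hsep x0 m hx0A (moral_walk_sub hm) ((moral_walk_nth _ _ _ _).1 hm).
  by rewrite hml.
rewrite inE => /orP [/eqP -> | hz] hzZ.
  by move: (open_path_head hc); rewrite hzZ.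
by move/allP: hmZ => /(_ z hz); rewrite hzZ.
Qed.

End MoralSepDsep.

Section DsepMoralSep.
Variables (V : finType) (G : HEDG V) (X Y Z : {set V}).
Implicit Types (x y u w e : V) (s m : seq V) (st : seq (ekind * V)) (k : ekind).
Local Notation A := (Anc G (X :|: Y :|: Z)).
Local Notation AZ := (Anc G Z).

Lemma bidir_chain_open_path w e : w \in A -> w \notin Z ->
  (forall h, exists st, open_path G Z A h w st /\ plast w st = e) ->
  forall s x h, x \in A -> h || (x \notin Z) -> all (fun z => z \in A) s ->
  path (bidirA G A) x s -> (w == last x s) || hE G w (last x s) ->
  exists st, open_path G Z A h x st /\ plast x st = e.
Proof.
move=> hwA hwZ hw; elim=> [|y s IH] x h hx hh hs hp hwl /=.
  case/orP: hwl => [/eqP hwx | hwx]; first by move: hw; rewrite hwx.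
  have [st [hc hl]] := hw false; exists ((Bwd, w) :: st).
  by split=> //; split=> //; rewrite /open_at /= andbT; case: h hh.
move: hp hs => /= /andP [hb hp] /andP [hyA hs].
have [st [hc hl]] := IH y true hyA isT hs hp hwl; exists ((Bi, y) :: st).
split=> //; split=> //; first by case/and3P: hb.
by rewrite /open_at /= andbT; case: h hh.
Qed.

Lemma moral_walk_open_path m u : u \in A -> u \notin Z -> moral_walk G A u m ->
  all (fun z => z \notin Z) m ->
  forall h, exists st, open_path G Z A h u st /\ plast u st = last u m.
Proof.
elim: m u => [|w m IH] u hu huZ /=; first by exists [::].
case=> -[_ _ hwA [v1 [s [hv1 hs hp huv hwl]]]] hm /andP [hwZ hmZ] h.
have hw := IH w hwA hwZ hm hmZ.
case/orP: huv => [/eqP huv1 | huv1].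
  rewrite -{}huv1 in hv1 hs hp hwl.
  by apply: (bidir_chain_open_path hwA hwZ hw hu _ hs hp hwl); rewrite huZ orbT.
have [st [hc hl]] := bidir_chain_open_path hwA hwZ hw (h := true) hv1 isT hs hp hwl.
by exists ((Fwd, v1) :: st); split=> //; split=> //; rewrite /open_at andbF.
Qed.

(* [open_reach y h]: an open path from [X] reaches [y], the flag [h] telling
   whether its last edge has an arrowhead at [y]. *)
Inductive open_reach : V -> bool -> Prop :=
| open_reach_start x : x \in X -> open_reach x false
| open_reach_step x h k y :
    open_reach x h -> edge_ok G k x y -> open_at Z AZ h k x -> open_reach y (head_at_later k).

Definition d_connected :=
  exists x0 st, [/\ x0 \in X, open_path G Z AZ false x0 st & plast x0 st \in Y].

Lemma open_reach_extend y h : open_reach y h -> forall st, open_path G Z AZ h y st ->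
  exists x0 st', [/\ x0 \in X, open_path G Z AZ false x0 st' & plast x0 st' = plast y st].
Proof.
elim=> [x hx | x h' k y' _ IH he hi] st hc; first by exists x, st.
by apply: (IH ((k, y') :: st)).
Qed.

Lemma open_reach_Y y h : open_reach y h -> y \in Y -> y \notin Z -> d_connected.
Proof.
move=> r hY hZ; have [x0 [st [hx hc hl]]] := open_reach_extend r (st := [::]) hZ.
by exists x0, st; rewrite hl.
Qed.

Lemma open_reach_forward p x h : path (hE G) x p -> open_reach x h -> x \notin AZ ->
  exists h', open_reach (last x p) h' /\ last x p \notin AZ.
Proof.
elim: p x h => [|x' p IH] x h /=; first by exists h.
case/andP=> he hp r hx; apply: (IH x' true hp); last exact: notin_Anc_child he hx.
by apply: (open_reach_step (k := Fwd) r he); rewrite /open_at andbF (notin_Anc hx).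
Qed.

Lemma open_reach_backward p x : path (hE G) x p -> last x p \in X -> x \notin AZ ->
  open_reach x false.
Proof.
elim: p x => [|x' p IH] x /=; first by move=> _ hl _; apply: open_reach_start.
case/andP=> he hp hl hx; have hx' := notin_Anc_child he hx.
by apply: (open_reach_step (k := Bwd) (IH x' hp hl hx') he); rewrite /open_at /= (notin_Anc hx').
Qed.

Lemma open_reach_restart x h : open_reach x h -> x \in A -> x \notin AZ ->
  d_connected \/ open_reach x false.
Proof.
move=> r; rewrite inE => /existsP [s /andP [hs hxs]] hx.
have hsZ : s \notin Z.
  by apply: contra hx => hsZ; rewrite inE; apply/existsP; exists s; rewrite hsZ.
case/connectP: hxs => p hp hl; subst s.
move: hs; rewrite !inE (negbTE hsZ) orbF => /orP [hX | hY].
  by right; apply: open_reach_backward hp hX hx.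
have [h' [r' hl]] := open_reach_forward hp r hx.
by left; apply: open_reach_Y r' hY (notin_Anc hl).
Qed.

Lemma open_path_d_connected st x h : open_path G Z A h x st -> plast x st \in Y ->
  open_reach x h \/ (x \notin Z /\ open_reach x false) -> d_connected.
Proof.
elim: st x h => [|[k y] st IH] x h /=.
  by move=> hxZ hY [r | [_ r]]; apply: (open_reach_Y r).
case=> he hi hc hY hr.
suff [// | [h' [r hok]]] : d_connected \/ exists h', open_reach x h' /\ open_at Z AZ h' k x.
  by apply: (IH y (head_at_later k) hc hY); left; apply: open_reach_step r he hok.
case: hr => [r | [hxZ r]]; last by right; exists false; rewrite /open_at /= hxZ.
case hcol: (h && head_at_earlier k); last first.
  by right; exists h; move: hi; rewrite /open_at hcol.
case hxAZ: (x \in AZ); first by right; exists h; rewrite /open_at hcol.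
have hxA : x \in A by move: hi; rewrite /open_at hcol.
case: (open_reach_restart r hxA (negbT hxAZ)) => [|r']; first by left.
by right; exists false; rewrite /open_at /= (notin_Anc (negbT hxAZ)).
Qed.

Lemma dsep_moral_walk x0 m : dsep G X Y Z -> x0 \in A -> moral_walk G A x0 m ->
  x0 \in X -> last x0 m \in Y -> has (fun z => z \in Z) (x0 :: m).
Proof.
move=> hsep hx0 hm hX hY; apply: contraT; rewrite -all_predC => /andP [hx0Z hmZ].
have [st [hc hl]] := moral_walk_open_path hx0 hx0Z hm hmZ false.
have [|x' [st' [hx' /open_path_unblocked [hv nb] hY']]] :=
  open_path_d_connected hc _ (or_introl (open_reach_start hX)); first by rewrite hl.
by case: nb; apply: hsep => //; left.
Qed.

End DsepMoralSep.

Lemma dsep_sym (V : finType) (G : HEDG V) (X Y Z : {set V}) :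
  dsep G X Y Z -> dsep G Y X Z.
Proof. by move=> hsep x0 st hv hxy; apply: hsep => //; tauto. Qed.

Unset Implicit Arguments.
Theorem mainTheorem4 (V : finType) (G : HEDG V) (X Y Z : {set V}) :
  dsep G X Y Z <-> moral_sep G (Anc G (X :|: Y :|: Z)) X Y Z.
Proof.
split; last exact: moral_sep_dsep.
move=> hsep x0 s hx0 _ /moral_walk_nth hm hxy; apply/hasP.
case: hxy => [[hX hY] | [hY hX]]; first exact: dsep_moral_walk hsep hx0 hm hX hY.
rewrite [X :|: Y]setUC in hx0 hm.
exact: dsep_moral_walk (dsep_sym hsep) hx0 hm hY hX.
Qed.
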